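(* Let $T$ be a rooted tree and $v$ a vertex of $T$. A vertex $u$ is the level successor of $v$ if and only if $u$ is the first vertex appearing after the last occurrence of $v$ in the Euler tour of $T$ such that $\mathrm{level}(u)\ge \mathrm{level}(v)$.
   Context: The level of the root $r$ is $0$, and each other vertex has level one more than its parent. The level successor of $v$ is the next vertex after $v$ in preorder that lies on the same level as $v$. The Euler tour of $T$ is the sequence of $2n-1$ vertices (where $n$ is the number of vertices) obtained by traversing $T$ depth-first starting and ending at the root, each tree edge traversed once downward and once upward, listing the current vertex initially and after every step. *)

From mathcomp Require Import all_boot.
Set Implicit Arguments. Unset Strict Implicit. Unset Printing Implicit Defensive.

(* Vertices are identified by their address: the sequence
   of child indices on the path from the root (the root is [::]). *)
Inductive tree := Node of seq tree.

Definition vertex := seq nat.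

Definition level (v : vertex) : nat := size v.

Fixpoint preorder (t : tree) : seq vertex :=
  let: Node ts := t in
  [::] :: (fix aux (i : nat) (ts : seq tree) : seq vertex :=
             match ts with
             | [::] => [::]
             | c :: cs => map (cons i) (preorder c) ++ aux i.+1 cs
             end) 0 ts.

(* Euler tour: start at the root, go down into each child subtree in order,
   come back up; the current vertex is listed initially and after each step.
   A tree with n vertices yields a sequence of length 2n-1. *)
Fixpoint euler (t : tree) : seq vertex :=
  let: Node ts := t in
  [::] :: (fix aux (i : nat) (ts : seq tree) : seq vertex :=
             match ts with
             | [::] => [::]
             | c :: cs => map (cons i) (euler c) ++ [:: [::]] ++ aux i.+1 cs
             end) 0 ts.

Definition level_successor (T : tree) (v u : vertex) : Prop :=
  let P := preorder T in
  exists i j, i < j /\ j < size P /\ nth [::] P i = v /\ nth [::] P j = u /\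
    level u = level v /\
    forall k, i < k -> k < j -> level (nth [::] P k) != level v.

Definition first_after_last_geq (T : tree) (v u : vertex) : Prop :=
  let E := euler T in
  exists i j, i < j /\ j < size E /\ nth [::] E i = v /\
    (forall k, i < k -> k < size E -> nth [::] E k != v) /\
    nth [::] E j = u /\ level v <= level u /\
    (forall k, i < k -> k < j -> level (nth [::] E k) < level v).

From mathcomp Require Import all_boot zify.
Set Implicit Arguments. Unset Strict Implicit.

(* At the last occurrence of v in the Euler tour the subtree of v has been
   traversed completely; afterwards the tour climbs through ancestors of v
   (levels < level v) until it descends into a fresh subtree, which it enters
   at level exactly level v, at the next vertex of that level in preorder.
   Both sides are the value of "the first vertex satisfying p after the last
   occurrence of v", and they are compared by induction on the tree; the key
   identity is that in any tree the first vertex of level m in preorder is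
   the first vertex of level >= m in the Euler tour. *)

Section FirstAfterLast.

Variable T : eqType.
Implicit Types (p : pred T) (s : seq T) (v x : T).

Fixpoint ofirst p s : option T :=
  if s is x :: s' then (if p x then Some x else ofirst p s') else None.

Definition ocat (o1 o2 : option T) : option T :=
  if o1 is Some x then Some x else o2.

Fixpoint next_after_last p v s : option T :=
  if s is x :: s' then
    if v \in s' then next_after_last p v s'
    else if x == v then ofirst p s' else None
  else None.

Lemma ocat_None (o : option T) : ocat o None = o.
Proof. by case: o. Qed.

Lemma ofirst_cat p s1 s2 : ofirst p (s1 ++ s2) = ocat (ofirst p s1) (ofirst p s2).
Proof. by elim: s1 => //= x s IH; case: (p x). Qed.

Lemma ofirst_None p s : ~~ has p s -> ofirst p s = None.
Proof. by elim: s => //= x s IH; rewrite negb_or => /andP[/negbTE-> /IH]. Qed.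

Lemma ofirstP x0 p s u : ofirst p s = Some u <->
  exists j, [/\ j < size s, nth x0 s j = u, p u
                & forall k, k < j -> ~~ p (nth x0 s k)].
Proof.
elim: s => [|x s IH] /=; first by split => // -[j []].
case px: (p x).
  split => [[<-]|[[|j] [_ /= <- pu lt_j]]] //; first by exists 0.
  by move: (lt_j 0 isT); rewrite /= px.
rewrite IH; split => [[j [lt_js <- pu lt_j]]|[[|j] [/= lt_js <- pu lt_j]]].
- by exists j.+1; split => // -[|k] /=; [rewrite px | apply: lt_j].
- by rewrite px in pu.
- by exists j; split => // k lt_kj; apply: (lt_j k.+1).
Qed.

Lemma next_after_last_None p v s : v \notin s -> next_after_last p v s = None.
Proof.
elim: s => //= x s IH; rewrite inE negb_or eq_sym => /andP[/negbTE-> vNs].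
by rewrite (negbTE vNs).
Qed.

Lemma next_after_last_cat_r p v s1 s2 : v \in s2 ->
  next_after_last p v (s1 ++ s2) = next_after_last p v s2.
Proof. by move=> vs2; elim: s1 => //= x s IH; rewrite mem_cat vs2 orbT. Qed.

Lemma next_after_last_cat_l p v s1 s2 : v \in s1 -> v \notin s2 ->
  next_after_last p v (s1 ++ s2) = ocat (next_after_last p v s1) (ofirst p s2).
Proof.
move=> + vNs2; elim: s1 => //= x s IH; rewrite mem_cat (negbTE vNs2) orbF inE.
case vs: (v \in s); first by move=> _; exact: IH.
by rewrite orbF eq_sym => ->; rewrite ofirst_cat.
Qed.

Lemma next_after_last_rcons p v s : next_after_last p v (rcons s v) = None.
Proof. by rewrite -cats1 next_after_last_cat_r ?mem_head //= eqxx. Qed.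

Lemma next_after_last_occurrence p v s1 s2 : v \notin s2 ->
  next_after_last p v (s1 ++ v :: s2) = ofirst p s2.
Proof.
move=> vNs2; rewrite -cat1s catA next_after_last_cat_l ?mem_cat ?mem_head ?orbT //.
by rewrite cats1 next_after_last_rcons.
Qed.

Section LastOccurrence.

Variables (x0 : T) (v : T) (s : seq T).

Definition last_occurrence i :=
  [/\ i < size s, nth x0 s i = v & forall k, i < k < size s -> nth x0 s k != v].

Lemma last_occurrence_exists : v \in s -> exists i, last_occurrence i.
Proof.
rewrite /last_occurrence; elim: s => //= x s' IH; rewrite inE.
case vs': (v \in s').
  case: (IH vs') => i [lt_is <- last_i] _; exists i.+1; split => //.
  by case=> [|k] //; apply: last_i.
rewrite orbF => /eqP <-; exists 0; split => //; case=> [|k] //= lt_ks.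
by apply: contraFN vs' => /eqP <-; rewrite mem_nth.
Qed.

Lemma next_after_last_at p i : last_occurrence i ->
  next_after_last p v s = ofirst p (drop i.+1 s).
Proof.
case=> lt_is nth_i last_i.
have vNdrop : v \notin drop i.+1 s.
  apply/(nthP x0) => -[k]; rewrite size_drop nth_drop => lt_k.
  by apply/eqP; apply: last_i; lia.
by rewrite -{1}(cat_take_drop i s) (drop_nth x0 lt_is) nth_i next_after_last_occurrence.
Qed.

End LastOccurrence.

Lemma next_after_lastP x0 p v s u : next_after_last p v s = Some u <->
  exists i j, [/\ last_occurrence x0 v s i, i < j < size s, nth x0 s j = u, p u
                & forall k, i < k < j -> ~~ p (nth x0 s k)].
Proof.
split => [next_u|[i [j [last_i /andP[lt_ij lt_js] nth_j pu first_j]]]].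
  have [|i last_i] := @last_occurrence_exists x0 v s.
    by apply/negPn/negP => /(next_after_last_None p); rewrite next_u.
  move: next_u; rewrite (next_after_last_at p last_i) (ofirstP x0) => -[j].
  rewrite size_drop nth_drop => -[lt_j <- pu first_j].
  exists i, (i.+1 + j); split => //; first by case: last_i => *; lia.
  move=> k /andP[lt_ik lt_kj]; have -> : k = i.+1 + (k - i.+1) by lia.
  by rewrite -nth_drop first_j //; lia.
rewrite (next_after_last_at p last_i) (ofirstP x0).
exists (j - i.+1); rewrite size_drop nth_drop subnKC //; split => //; first lia.
by move=> k lt_k; rewrite nth_drop first_j //; lia.
Qed.

End FirstAfterLast.

Lemma ofirst_map (T1 T2 : eqType) (f : T1 -> T2) (p : pred T2) (s : seq T1) :
  ofirst p (map f s) = omap f (ofirst (preim f p) s).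
Proof. by elim: s => //= x s ->; case: (p (f x)). Qed.

Lemma next_after_last_map (T1 T2 : eqType) (f : T1 -> T2) (inj_f : injective f)
    (p : pred T2) v s :
  next_after_last p (f v) (map f s) = omap f (next_after_last (preim f p) v s).
Proof.
elim: s => //= x s ->; rewrite (mem_map inj_f) (inj_eq inj_f).
by case: (v \in s) => //; case: (x == v); rewrite ?ofirst_map.
Qed.

(* The inner fixpoints of [preorder] and [euler]; the trees of [ts] are the
   children numbered [i], [i+1], ... *)
Fixpoint preorder_forest (i : nat) (ts : seq tree) : seq vertex :=
  if ts is c :: cs then map (cons i) (preorder c) ++ preorder_forest i.+1 cs
  else [::].

Fixpoint euler_forest (i : nat) (ts : seq tree) : seq vertex :=
  if ts is c :: cs then map (cons i) (euler c) ++ [::] :: euler_forest i.+1 cs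
  else [::].

Lemma preorderE ts : preorder (Node ts) = [::] :: preorder_forest 0 ts.
Proof. by []. Qed.

Lemma eulerE ts : euler (Node ts) = [::] :: euler_forest 0 ts.
Proof. by []. Qed.

Fixpoint all_trees (P : tree -> Prop) (ts : seq tree) : Prop :=
  if ts is c :: cs then P c /\ all_trees P cs else True.

Definition tree_ind_nested (P : tree -> Prop)
    (IH : forall ts, all_trees P ts -> P (Node ts)) : forall t, P t :=
  fix F t := let: Node ts := t in
    IH ts ((fix G ts : all_trees P ts :=
             if ts is c :: cs return all_trees P ts then conj (F c) (G cs) else I) ts).

Lemma cons_inj (i : nat) : injective (cons i : vertex -> vertex).
Proof. by move=> a b []. Qed.

Lemma preorder_forest_head i ts x :
  x \in preorder_forest i ts -> exists a y, x = a :: y /\ i <= a.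
Proof.
elim: ts i => [|c cs IH] i //=; rewrite mem_cat => /orP[/mapP[y _ ->]|/IH].
  by exists i, y.
by case=> a [y [-> le_ia]]; exists a, y; split => //; apply: ltnW.
Qed.

Lemma euler_forest_head i ts x :
  x \in euler_forest i ts -> x = [::] \/ exists a y, x = a :: y /\ i <= a.
Proof.
elim: ts i => [|c cs IH] i //=; rewrite mem_cat inE.
case/orP => [/mapP[y _ ->]|/orP[/eqP->|/IH[->|[a [y [-> le_ia]]]]]]; try by left.
  by right; exists i, y.
by right; exists a, y; split => //; apply: ltnW.
Qed.

Lemma root_notin_preorder_forest i ts : [::] \notin preorder_forest i ts.
Proof. by apply/negP => /preorder_forest_head[a [y []]]. Qed.

Lemma euler_forest_nil_or_rcons i ts :
  euler_forest i ts = [::] \/ exists s, euler_forest i ts = rcons s [::].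
Proof.
elim: ts i => [|c cs IH] i /=; [by left | right].
case: (IH i.+1) => [->|[s ->]]; first by exists (map (cons i) (euler c)); rewrite cats1.
by exists (map (cons i) (euler c) ++ [::] :: s); rewrite rcons_cat.
Qed.

Lemma all_trees_all (P : tree -> Prop) ts : (forall t, P t) -> all_trees P ts.
Proof. by move=> allP; elim: ts => //= c cs ->. Qed.

Lemma preorder_forest_sub_euler_forest i ts :
  all_trees (fun t => {subset preorder t <= euler t}) ts ->
  {subset preorder_forest i ts <= euler_forest i ts}.
Proof.
elim: ts i => [|c cs IH] //= i [sub_c sub_cs] x.
rewrite !mem_cat inE => /orP[/mapP[y /sub_c y_c ->]|/(IH _ sub_cs)->].
  by rewrite map_f.
by rewrite !orbT.
Qed.

Lemma preorder_sub_euler t : {subset preorder t <= euler t}.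
Proof.
elim/tree_ind_nested: t => ts /(@preorder_forest_sub_euler_forest 0) sub_ts x.
by rewrite preorderE eulerE !inE => /orP[-> // | /sub_ts ->]; rewrite orbT.
Qed.

Lemma preorder_uniq t : uniq (preorder t).
Proof.
elim/tree_ind_nested: t => ts; rewrite preorderE /= root_notin_preorder_forest /=.
elim: ts 0 => [|c cs IH] //= i [uniq_c uniq_cs].
rewrite cat_uniq (map_inj_uniq (@cons_inj i)) uniq_c IH //= andbT.
apply/hasPn => x /preorder_forest_head[a [y [-> lt_ia]]].
by apply/mapP => -[z _ [eq_ai _]]; lia.
Qed.

Lemma ofirst_level_preorder_forest i ts m :
  all_trees (fun t => forall n, ofirst (fun w => level w == n) (preorder t)
                              = ofirst (fun w => n <= level w) (euler t)) ts ->
  ofirst (fun w => level w == m.+1) (preorder_forest i ts)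
  = ofirst (fun w => m.+1 <= level w) (euler_forest i ts).
Proof.
elim: ts i => [|c cs IH] //= i [first_c first_cs].
by rewrite !ofirst_cat !ofirst_map /= first_c IH.
Qed.

Lemma ofirst_level_preorder_euler t m :
  ofirst (fun w => level w == m) (preorder t) = ofirst (fun w => m <= level w) (euler t).
Proof.
elim/tree_ind_nested: t m => ts first_ts [|m] //.
by rewrite preorderE eulerE /= ofirst_level_preorder_forest.
Qed.

Lemma next_level_preorder_forest i ts v :
  all_trees (fun t => forall v, v \in preorder t ->
    next_after_last (fun w => level w == level v) v (preorder t)
    = next_after_last (fun w => level v <= level w) v (euler t)) ts ->
  v \in preorder_forest i ts ->
  next_after_last (fun w => level w == level v) v (preorder_forest i ts)
  = next_after_last (fun w => level v <= level w) v (euler_forest i ts).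
Proof.
have sub_forest j ss :=
  @preorder_forest_sub_euler_forest j ss (all_trees_all ss preorder_sub_euler).
elim: ts i => [|c cs IH] //= i [next_c next_cs].
rewrite mem_cat => /orP[/mapP[v' v'_c ->]|v_cs]; last first.
  rewrite !next_after_last_cat_r ?inE ?sub_forest ?orbT //= sub_forest //.
  exact: IH.
have v_later (x : vertex) : x \in euler_forest i.+1 cs -> x != i :: v'.
  by case/euler_forest_head => [->|[a [y [-> lt_ia]]]] //; apply/eqP => -[]; lia.
rewrite next_after_last_cat_l ?map_f //; last first.
  by apply/negP => /sub_forest /v_later /eqP.
rewrite -[[::] :: _]cat1s catA next_after_last_cat_l; last first.
- by apply/negP => /v_later /eqP.
- by rewrite mem_cat map_f ?preorder_sub_euler.
rewrite next_after_last_cat_l ?map_f ?preorder_sub_euler //= ocat_None.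
rewrite !(next_after_last_map (@cons_inj i)); congr ocat.
  by congr omap; exact: next_c.
exact: ofirst_level_preorder_forest (all_trees_all _ ofirst_level_preorder_euler).
Qed.

Lemma next_level_preorder_euler t v : v \in preorder t ->
  next_after_last (fun w => level w == level v) v (preorder t)
  = next_after_last (fun w => level v <= level w) v (euler t).
Proof.
elim/tree_ind_nested: t v => ts next_ts v.
rewrite preorderE eulerE inE => /orP[/eqP->|v_ts] /=.
  rewrite (negbTE (root_notin_preorder_forest 0 ts)) ofirst_None; last first.
    by apply/hasPn => x /preorder_forest_head[a [y [-> _]]].
  case: (euler_forest_nil_or_rcons 0 ts) => [->|[s ->]] //.
  by rewrite mem_rcons mem_head next_after_last_rcons.
rewrite v_ts preorder_forest_sub_euler_forest ?next_level_preorder_forest //.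
exact: all_trees_all _ preorder_sub_euler.
Qed.

Lemma level_successorE T v u :
  level_successor T v u <->
  next_after_last (fun w => level w == level v) v (preorder T) = Some u.
Proof.
rewrite (next_after_lastP [::]) /level_successor.
have uniq_T := preorder_uniq T.
split => [[i [j [lt_ij [lt_jT [nth_i [nth_j [lvl_u other_lvl]]]]]]]|].
  exists i, j; split; rewrite ?lt_ij ?lvl_u ?eqxx //.
    split; [exact: ltn_trans lt_jT | by [] | move=> k /andP[lt_ik lt_kT]].
    by rewrite -nth_i nth_uniq ?gtn_eqF //; exact: ltn_trans lt_jT.
  by move=> k /andP[]; apply: other_lvl.
move=> [i [j [[_ nth_i _] /andP[lt_ij lt_jT] nth_j /eqP lvl_u other_lvl]]].
exists i, j; do 5!split => //.
by move=> k lt_ik lt_kj; apply: other_lvl; rewrite lt_ik.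
Qed.

Lemma first_after_last_geqE T v u :
  first_after_last_geq T v u <->
  next_after_last (fun w => level v <= level w) v (euler T) = Some u.
Proof.
rewrite (next_after_lastP [::]) /first_after_last_geq.
split => [[i [j [lt_ij [lt_jE [nth_i [last_i [nth_j [lvl_u below]]]]]]]]|].
  exists i, j; split; rewrite ?lt_ij //.
    by split; [exact: ltn_trans lt_jE | by [] | move=> k /andP[]; apply: last_i].
  by move=> k /andP[lt_ik lt_kj]; rewrite -ltnNge below.
move=> [i [j [[_ nth_i last_i] /andP[lt_ij lt_jE] nth_j lvl_u below]]].
exists i, j; do 3!split => //; split.
  by move=> k lt_ik lt_kE; apply: last_i; rewrite lt_ik.
do 2!split => //.
by move=> k lt_ik lt_kj; rewrite ltnNge below // lt_ik.
Qed.

Theorem mainTheorem6 (T : tree) (v u : vertex) :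
  v \in preorder T ->
  (level_successor T v u <-> first_after_last_geq T v u).
Proof.
move=> v_T.
by rewrite level_successorE first_after_last_geqE next_level_preorder_euler.
Qed.
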